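(* For any smooth function $f$ on the total space $\mathfrak X$ and all $k,l$, $$\overline{v_l}(\xi_kf)-\xi_k(\overline{v_l}f)=\bar P(e_{k\bar l})P(f)-2f_{k\bar l}\Box f+\lambda^{-1}\partial_zf_{k\bar l}\,\partial_{\bar z}f.$$
   Context: $g\ge2$, $n=3g-3$. Over a local chart of (a manifold cover of) $\mathcal M_g$ with holomorphic coordinates $s_1,\dots,s_n$, $\partial_i=\partial/\partial s_i$, let $\mathfrak X$ be the universal family with local fiber coordinate $z$. Each fiber carries the hyperbolic metric $\frac{\sqrt{-1}}2\lambda\,dz\wedge d\bar z$ with $\partial_z\partial_{\bar z}\log\lambda=\lambda$. $a_i=-\lambda^{-1}\partial_i\partial_{\bar z}\log\lambda$, $A_i=\partial_{\bar z}a_i$, $v_i=\partial_i+a_i\partial_z$, $\overline{v_l}$ its complex conjugate. $\Box=-\lambda^{-1}\partial_z\partial_{\bar z}$. $e_{i\bar j}=\partial_i\partial_{\bar j}\log\lambda-\lambda a_i\overline{a_j}$, $f_{i\bar j}=A_i\overline{A_j}$. $P(f)=\partial_z(\lambda^{-1}\partial_zf)$, $\bar P(f)=\partial_{\bar z}(\lambda^{-1}\partial_{\bar z}f)$, $\xi_k(f)=-\lambda^{-1}\partial_z(A_k\partial_zf)$. *)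

(* Local chart of the universal family:
   a point is (s, z) with s : nat -> C the base coordinates (only s_0..s_{n-1}
   are meaningful) and z : C the fiber coordinate. Functions are C-valued. *)
From Stdlib Require Import Reals List.
From Coquelicot Require Import Coquelicot.
Import ListNotations.

Definition Pt : Type := ((nat -> C) * C)%type.

Inductive dir := DReS (i : nat) | DImS (i : nat) | DReZ | DImZ.

Definition move (d : dir) (t : R) (p : Pt) : Pt :=
  match d with
  | DReS i => (fun j => if Nat.eqb j i then Cplus (fst p j) (RtoC t) else fst p j, snd p)
  | DImS i => (fun j => if Nat.eqb j i then Cplus (fst p j) (0%R, t) else fst p j, snd p)
  | DReZ => (fst p, Cplus (snd p) (RtoC t))
  | DImZ => (fst p, Cplus (snd p) (0%R, t))
  end.

Definition pd (d : dir) (f : Pt -> C) (p : Pt) : C :=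
  (Derive (fun t => Re (f (move d t p))) 0, Derive (fun t => Im (f (move d t p))) 0).

Local Open Scope C_scope.

Definition ds (i : nat) (f : Pt -> C) (p : Pt) : C :=
  / 2 * (pd (DReS i) f p - Ci * pd (DImS i) f p).
Definition dsb (i : nat) (f : Pt -> C) (p : Pt) : C :=
  / 2 * (pd (DReS i) f p + Ci * pd (DImS i) f p).
Definition dz (f : Pt -> C) (p : Pt) : C :=
  / 2 * (pd DReZ f p - Ci * pd DImZ f p).
Definition dzb (f : Pt -> C) (p : Pt) : C :=
  / 2 * (pd DReZ f p + Ci * pd DImZ f p).

Local Close Scope C_scope.

Definition relevant (n : nat) (d : dir) : Prop :=
  match d with DReS i | DImS i => (i < n)%nat | _ => True end.

Fixpoint iter_pd (l : list dir) (f : Pt -> C) : Pt -> C :=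
  match l with nil => f | d :: l' => pd d (iter_pd l' f) end.

Definition near_pt (n : nat) (delta : R) (p q : Pt) : Prop :=
  (forall i, (i < n)%nat -> Cmod (Cminus (fst q i) (fst p i)) < delta) /\
  (forall i, (n <= i)%nat -> fst q i = fst p i) /\
  Cmod (Cminus (snd q) (snd p)) < delta.

Definition open_chart (n : nat) (U : Pt -> Prop) : Prop :=
  forall p, U p -> exists delta, 0 < delta /\ forall q, near_pt n delta p q -> U q.

Definition cont_on (n : nat) (U : Pt -> Prop) (g : Pt -> C) : Prop :=
  forall p, U p -> forall eps, 0 < eps -> exists delta, 0 < delta /\
    forall q, U q -> near_pt n delta p q -> Cmod (Cminus (g q) (g p)) < eps.

Definition smooth (n : nat) (U : Pt -> Prop) (f : Pt -> C) : Prop :=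
  forall l : list dir, List.Forall (relevant n) l ->
    cont_on n U (iter_pd l f) /\
    forall d, relevant n d -> forall p, U p ->
      ex_derive (fun t => Re (iter_pd l f (move d t p))) 0 /\
      ex_derive (fun t => Im (iter_pd l f (move d t p))) 0.

Local Open Scope C_scope.
Section Objects.
Variable lam : Pt -> R.

Definition loglam (p : Pt) : C := RtoC (ln (lam p)).
Definition lamC (p : Pt) : C := RtoC (lam p).

Definition a_ (i : nat) (p : Pt) : C := - (/ lamC p * ds i (dzb loglam) p).
Definition A_ (i : nat) : Pt -> C := dzb (a_ i).
Definition v_ (i : nat) (f : Pt -> C) (p : Pt) : C := ds i f p + a_ i p * dz f p.
(* complex conjugate of v_l : conj(d/ds_l) + conj(a_l) d/dzbar *)
Definition vbar_ (l : nat) (f : Pt -> C) (p : Pt) : C :=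
  dsb l f p + Cconj (a_ l p) * dzb f p.
Definition Box (f : Pt -> C) (p : Pt) : C := - (/ lamC p * dz (dzb f) p).
Definition e_ (k l : nat) (p : Pt) : C :=
  ds k (dsb l loglam) p - lamC p * a_ k p * Cconj (a_ l p).
Definition f_ (k l : nat) (p : Pt) : C := A_ k p * Cconj (A_ l p).
Definition P_ (f : Pt -> C) : Pt -> C := dz (fun p => / lamC p * dz f p).
Definition Pb_ (f : Pt -> C) : Pt -> C := dzb (fun p => / lamC p * dzb f p).
Definition xi_ (k : nat) (f : Pt -> C) (p : Pt) : C :=
  - (/ lamC p * dz (fun q => A_ k q * dz f q) p).
End Objects.
Local Close Scope C_scope.

(* Both sides are differential polynomials in f and phi = log lambda whose coefficients are
   integer powers of lambda.  Expanding them with the Leibniz rule and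
   d(lambda^z) = z lambda^z d(phi), and using that Wirtinger derivatives commute on smooth
   functions (Schwarz), every derivative of f or phi becomes a monomial
   d_{s_k}^i d_{sbar_l}^j d_z^a d_{zbar}^b applied to f or phi.  The curvature equation
   d_z d_{zbar} phi = lambda then eliminates the mixed z/zbar derivatives of phi, after which the
   two sides agree as rational functions of these monomials and of lambda.  The expansion is
   computed by reflection on a small language of expressions. *)
From Stdlib Require Import Reals List Lra ZArith FunctionalExtensionality.
From Coquelicot Require Import Coquelicot.
Local Open Scope R_scope.

Lemma locally_0_of_Rabs (P : R -> Prop) (r : R) :
  0 < r -> (forall t, Rabs t < r -> P t) -> locally 0 P.
Proof.
  intros Hr HP. exists (mkposreal r Hr). intros t Ht. apply HP.
  unfold ball in Ht; simpl in Ht; unfold AbsRing_ball, abs, minus, plus, opp in Ht; simpl in Ht.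
  now rewrite Ropp_0, Rplus_0_r in Ht.
Qed.

Lemma Cmod_pure_imag (t : R) : Cmod (0, t) = Rabs t.
Proof.
  unfold Cmod; simpl. replace (0 * (0 * 1) + t * (t * 1)) with (Rsqr t) by (unfold Rsqr; ring).
  apply sqrt_Rsqr_abs.
Qed.

Lemma Cmod_minus_diag (z : C) : Cmod (z - z)%C = 0.
Proof.
  replace (z - z)%C with (RtoC 0) by (apply injective_projections; simpl; ring).
  rewrite Cmod_R; apply Rabs_R0.
Qed.

Lemma Cmod_minus_plus_le (a b c : C) : Cmod (a + c - b)%C <= Cmod (a - b)%C + Cmod c.
Proof.
  replace (a + c - b)%C with (a - b + c)%C by (apply injective_projections; simpl; ring).
  apply Cmod_triangle.
Qed.

Lemma near_pt_refl n r p : 0 < r -> near_pt n r p p.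
Proof. intros Hr; repeat split; intros; rewrite ?Cmod_minus_diag; auto. Qed.

Lemma near_pt_le n r1 r2 p q : r1 <= r2 -> near_pt n r1 p q -> near_pt n r2 p q.
Proof.
  intros Hr [Hs [Hout Hz]]; repeat split; auto.
  - intros i Hi; specialize (Hs i Hi); lra.
  - lra.
Qed.

Lemma near_pt_move n r1 r2 p q d t :
  relevant n d -> near_pt n r1 p q -> Rabs t < r2 -> near_pt n (r1 + r2) p (move d t q).
Proof.
  intros Hd [Hs [Hout Hz]] Ht. pose proof (Rabs_pos t).
  assert (Hs' : forall i, (i < n)%nat -> Cmod (fst q i - fst p i)%C < r1 + r2)
    by (intros i Hi; specialize (Hs i Hi); lra).
  destruct d as [i|i| |]; simpl in Hd |- *; repeat split; simpl; auto.
  all: try (eapply Rle_lt_trans; [apply Cmod_minus_plus_le|];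
            rewrite ?Cmod_R, ?Cmod_pure_imag; lra).
  all: try lra.
  all: intros j Hj; destruct (Nat.eqb_spec j i) as [->|]; auto.
  all: try (eapply Rle_lt_trans; [apply Cmod_minus_plus_le|];
            rewrite ?Cmod_R, ?Cmod_pure_imag; specialize (Hs i Hj); lra).
  all: exfalso; apply (Nat.lt_irrefl i); eapply Nat.lt_le_trans; eauto.
Qed.

Lemma near_pt_move_self n r p d t : relevant n d -> 0 < r -> Rabs t < r -> near_pt n r p (move d t p).
Proof.
  intros Hd Hr Ht. set (h := (r - Rabs t) / 2).
  apply near_pt_le with (h + (Rabs t + h)); [unfold h; lra|].
  apply near_pt_move; auto; [apply near_pt_refl|]; unfold h; lra.
Qed.

Lemma near_pt_move2 n r p d1 d2 u v : relevant n d1 -> relevant n d2 -> 0 < r ->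
  Rabs u < r / 2 -> Rabs v < r / 2 -> near_pt n r p (move d1 u (move d2 v p)).
Proof.
  intros H1 H2 Hr Hu Hv. replace r with (r / 2 + r / 2) by field.
  apply near_pt_move; auto. apply near_pt_move_self; auto. lra.
Qed.

Lemma move_0 d p : move d 0 p = p.
Proof.
  destruct p as [s z]; destruct d as [i|i| |]; simpl; f_equal;
    try (apply functional_extensionality; intro j; destruct (Nat.eqb j i));
    try (apply injective_projections; simpl; ring); auto.
Qed.

Lemma move_add d s t p : move d t (move d s p) = move d (s + t) p.
Proof.
  destruct p as [sp z]; destruct d as [i|i| |]; simpl; f_equal;
    try (apply functional_extensionality; intro j; destruct (Nat.eqb j i));
    try (apply injective_projections; simpl; ring); auto.
Qed.

Lemma move_comm d1 d2 s t p : move d1 s (move d2 t p) = move d2 t (move d1 s p).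
Proof.
  destruct p as [sp z]; destruct d1 as [i|i| |]; destruct d2 as [i'|i'| |]; simpl; f_equal;
    try (apply functional_extensionality; intro j; destruct (Nat.eqb j i); destruct (Nat.eqb j i'));
    try (apply injective_projections; simpl; ring); auto.
Qed.

Lemma Derive_shift (h : R -> R) x : Derive h x = Derive (fun t => h (x + t)) 0.
Proof. unfold Derive. f_equal. apply Lim_ext. intro y. now rewrite Rplus_0_l, Rplus_0_r. Qed.

Lemma ex_derive_shift (h : R -> R) x : ex_derive (fun t => h (x + t)) 0 -> ex_derive h x.
Proof.
  intro H.
  assert (Hc : ex_derive (fun y => (fun t => h (x + t)) (y - x)) x).
  { apply (ex_derive_comp (fun t => h (x + t)) (fun y => y - x)).
    - now rewrite Rminus_diag.
    - auto_derive; auto. }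
  eapply ex_derive_ext; [|exact Hc]. intro t; simpl. f_equal; ring.
Qed.

Lemma pd_conj F d p : pd d (fun q => Cconj (F q)) p = Cconj (pd d F p).
Proof.
  change (pd d (fun q => Cconj (F q)) p) with
    (Derive (fun t => Re (F (move d t p))) 0, Derive (fun t => - Im (F (move d t p))) 0).
  now rewrite Derive_opp.
Qed.

Lemma ds_conj i F p : Cconj (ds i F p) = dsb i (fun q => Cconj (F q)) p.
Proof.
  unfold ds, dsb. rewrite !pd_conj.
  destruct (pd (DReS i) F p), (pd (DImS i) F p). apply injective_projections; simpl; field.
Qed.

Lemma dzb_conj F p : Cconj (dzb F p) = dz (fun q => Cconj (F q)) p.
Proof.
  unfold dz, dzb. rewrite !pd_conj.
  destruct (pd DReZ F p), (pd DImZ F p). apply injective_projections; simpl; field.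
Qed.

Lemma conj_RtoC (x : R) : Cconj (RtoC x) = RtoC x.
Proof. apply injective_projections; simpl; ring. Qed.

Section Chart.
Variable n : nat.
Variable U : Pt -> Prop.
Hypothesis hU : open_chart n U.

Definition eq_on (F G : Pt -> C) : Prop := forall p, U p -> F p = G p.

Lemma eq_on_refl F : eq_on F F.
Proof. now intros p _. Qed.

Lemma eq_on_sym F G : eq_on F G -> eq_on G F.
Proof. intros H p Hp; symmetry; auto. Qed.

Lemma eq_on_trans F G H : eq_on F G -> eq_on G H -> eq_on F H.
Proof. intros H1 H2 p Hp; rewrite H1; auto. Qed.

Definition C1 (F : Pt -> C) : Prop :=
  cont_on n U F /\ forall d, relevant n d -> forall p, U p ->
    ex_derive (fun t => Re (F (move d t p))) 0 /\ ex_derive (fun t => Im (F (move d t p))) 0.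

Lemma U_move d p : relevant n d -> U p ->
  exists r, 0 < r /\ forall t, Rabs t < r -> U (move d t p).
Proof.
  intros Hd Hp. destruct (hU p Hp) as [r [Hr H]].
  exists r; split; auto. intros t Ht. apply H, near_pt_move_self; auto.
Qed.

Lemma eq_on_locally_move F G d p : relevant n d -> U p -> eq_on F G ->
  locally 0 (fun t => F (move d t p) = G (move d t p)).
Proof.
  intros Hd Hp HFG. destruct (U_move d p Hd Hp) as [r [Hr H]].
  apply (locally_0_of_Rabs _ r Hr). auto.
Qed.

Lemma pd_eq_on F G d : relevant n d -> eq_on F G -> eq_on (pd d F) (pd d G).
Proof.
  intros Hd HFG p Hp. unfold pd. f_equal; apply Derive_ext_loc;
    generalize (eq_on_locally_move F G d p Hd Hp HFG); apply filter_imp; intros t Ht; now rewrite Ht.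
Qed.

Lemma C1_eq_on F G : eq_on F G -> C1 F -> C1 G.
Proof.
  intros HFG [Hc Hd]. split.
  - intros p Hp eps He. destruct (Hc p Hp eps He) as [r [Hr H]].
    exists r; split; auto. intros q Hq Hn. rewrite <- !HFG; auto.
  - intros d Hrel p Hp. destruct (Hd d Hrel p Hp) as [Hre Him].
    pose proof (eq_on_locally_move F G d p Hrel Hp HFG) as Hloc.
    split; [eapply ex_derive_ext_loc; [|exact Hre] | eapply ex_derive_ext_loc; [|exact Him]];
      (eapply filter_imp; [|exact Hloc]); intros t Ht; simpl; now rewrite Ht.
Qed.

Lemma iter_pd_app l1 l2 F : iter_pd (l1 ++ l2) F = iter_pd l1 (iter_pd l2 F).
Proof. induction l1 as [|d l1 IH]; simpl; auto. now rewrite IH. Qed.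

Lemma smooth_C1 F : smooth n U F -> C1 F.
Proof. intro H. apply (H nil). constructor. Qed.

Lemma smooth_pd F d : relevant n d -> smooth n U F -> smooth n U (pd d F).
Proof.
  intros Hd H l Hl. change (pd d F) with (iter_pd (d :: nil) F). rewrite <- iter_pd_app.
  apply H, Forall_app; auto.
Qed.

Lemma smooth_coind (Q : (Pt -> C) -> Prop) :
  (forall F, Q F -> C1 F /\ forall d, relevant n d -> Q (pd d F)) ->
  forall F, Q F -> smooth n U F.
Proof.
  intros HQ F QF l Hl. revert F QF. induction l as [|d l IH] using rev_ind; intros F QF.
  - apply (HQ F QF).
  - rewrite iter_pd_app. apply Forall_app in Hl as [Hl Hd]. inversion Hd; subst.
    apply IH; auto. apply (HQ F QF); auto.
Qed.

Lemma smooth_eq_on F G : eq_on F G -> smooth n U F -> smooth n U G.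
Proof.
  intros HFG HF. apply (smooth_coind (fun H => exists F, smooth n U F /\ eq_on F H)); [|eauto].
  intros H [F' [HF' HE]]. split.
  - eapply C1_eq_on; eauto. now apply smooth_C1.
  - intros d Hd. exists (pd d F'). split; [now apply smooth_pd | now apply pd_eq_on].
Qed.

Definition cont_at (F : Pt -> C) (p : Pt) : Prop :=
  forall eps, 0 < eps -> exists r, 0 < r /\
    forall q, U q -> near_pt n r p q -> Cmod (F q - F p)%C < eps.

Lemma near_and p (P Q : Pt -> Prop) :
  (exists r, 0 < r /\ forall q, U q -> near_pt n r p q -> P q) ->
  (exists r, 0 < r /\ forall q, U q -> near_pt n r p q -> Q q) ->
  exists r, 0 < r /\ forall q, U q -> near_pt n r p q -> P q /\ Q q.
Proof.
  intros [r1 [H1 K1]] [r2 [H2 K2]]. exists (Rmin r1 r2); split; [now apply Rmin_pos|].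
  intros q Hq Hn; split; [apply K1|apply K2]; auto; eapply near_pt_le; eauto.
  - apply Rmin_l.
  - apply Rmin_r.
Qed.

Lemma cont_at_plus F G p : cont_at F p -> cont_at G p -> cont_at (fun q => F q + G q)%C p.
Proof.
  intros HF HG eps He. assert (He2 : 0 < eps / 2) by lra.
  destruct (near_and p _ _ (HF _ He2) (HG _ He2)) as [r [Hr K]].
  exists r; split; auto. intros q Hq Hn. destruct (K q Hq Hn) as [K1 K2].
  replace (F q + G q - (F p + G p))%C with ((F q - F p) + (G q - G p))%C
    by (apply injective_projections; simpl; ring).
  eapply Rle_lt_trans; [apply Cmod_triangle|]. lra.
Qed.

Lemma cont_at_mult F G p : cont_at F p -> cont_at G p -> cont_at (fun q => F q * G q)%C p.
Proof.
  intros HF HG eps He.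
  set (a := Cmod (F p)). set (b := Cmod (G p)).
  assert (Ha : 0 <= a) by apply Cmod_ge_0. assert (Hb : 0 <= b) by apply Cmod_ge_0.
  set (e1 := eps / (2 * (b + 1))). set (e2 := Rmin 1 (eps / (2 * (a + 1)))).
  assert (He1 : 0 < e1) by (unfold e1; apply Rdiv_lt_0_compat; lra).
  assert (He2 : 0 < e2) by (unfold e2; apply Rmin_pos; [lra|apply Rdiv_lt_0_compat; lra]).
  assert (He2_1 : e2 <= 1) by apply Rmin_l.
  assert (He2_eps : a * e2 < eps / 2).
  { apply Rle_lt_trans with (a * (eps / (2 * (a + 1)))); [apply Rmult_le_compat_l; auto; apply Rmin_r|].
    replace (a * (eps / (2 * (a + 1)))) with (eps / 2 - eps / (2 * (a + 1))) by (field; lra).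
    assert (0 < eps / (2 * (a + 1))) by (apply Rdiv_lt_0_compat; lra). lra. }
  destruct (near_and p _ _ (HF e1 He1) (HG e2 He2)) as [r [Hr K]].
  exists r; split; auto. intros q Hq Hn. destruct (K q Hq Hn) as [K1 K2].
  replace (F q * G q - F p * G p)%C with ((F q - F p) * G q + F p * (G q - G p))%C
    by (apply injective_projections; simpl; ring).
  eapply Rle_lt_trans; [apply Cmod_triangle|]. rewrite !Cmod_mult. fold a.
  assert (HGq : Cmod (G q) <= b + 1).
  { replace (G q) with (G p + (G q - G p))%C by (apply injective_projections; simpl; ring).
    eapply Rle_trans; [apply Cmod_triangle|]. fold b. lra. }
  assert (T1 : Cmod (F q - F p)%C * Cmod (G q) <= e1 * (b + 1))
    by (apply Rmult_le_compat; try apply Cmod_ge_0; lra).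
  assert (T2 : a * Cmod (G q - G p)%C <= a * e2) by (apply Rmult_le_compat_l; lra).
  assert (T3 : e1 * (b + 1) = eps / 2) by (unfold e1; field; lra).
  lra.
Qed.

Lemma C1_const c : C1 (fun _ => c).
Proof.
  split.
  - intros p Hp eps He. exists 1; split; [lra|]. intros q _ _. rewrite Cmod_minus_diag; lra.
  - intros d Hd p Hp; split; apply ex_derive_const.
Qed.

Lemma C1_plus F G : C1 F -> C1 G -> C1 (fun q => F q + G q)%C.
Proof.
  intros [HcF HdF] [HcG HdG]. split.
  - intros p Hp. apply cont_at_plus; [exact (HcF p Hp)|exact (HcG p Hp)].
  - intros d Hd p Hp. destruct (HdF d Hd p Hp), (HdG d Hd p Hp).
    split.
    + apply (ex_derive_plus (fun t => Re (F (move d t p))) (fun t => Re (G (move d t p)))); auto.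
    + apply (ex_derive_plus (fun t => Im (F (move d t p))) (fun t => Im (G (move d t p)))); auto.
Qed.

Lemma C1_mult F G : C1 F -> C1 G -> C1 (fun q => F q * G q)%C.
Proof.
  intros [HcF HdF] [HcG HdG]. split.
  - intros p Hp. apply cont_at_mult; [exact (HcF p Hp)|exact (HcG p Hp)].
  - intros d Hd p Hp. destruct (HdF d Hd p Hp), (HdG d Hd p Hp).
    split.
    + apply (ex_derive_minus (fun t => Re (F (move d t p)) * Re (G (move d t p)))
                             (fun t => Im (F (move d t p)) * Im (G (move d t p))));
        apply ex_derive_mult; auto.
    + apply (ex_derive_plus (fun t => Re (F (move d t p)) * Im (G (move d t p)))
                            (fun t => Im (F (move d t p)) * Re (G (move d t p))));
        apply ex_derive_mult; auto.
Qed.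

Lemma pd_const c d p : pd d (fun _ => c) p = RtoC 0.
Proof. unfold pd. now rewrite !Derive_const. Qed.

Lemma pd_plus F G d p : C1 F -> C1 G -> relevant n d -> U p ->
  pd d (fun q => F q + G q)%C p = (pd d F p + pd d G p)%C.
Proof.
  intros [_ HdF] [_ HdG] Hd Hp. destruct (HdF d Hd p Hp), (HdG d Hd p Hp).
  change (pd d (fun q => F q + G q)%C p) with
    (Derive (fun t => Re (F (move d t p)) + Re (G (move d t p))) 0,
     Derive (fun t => Im (F (move d t p)) + Im (G (move d t p))) 0).
  rewrite !Derive_plus by auto. reflexivity.
Qed.

Lemma pd_mult F G d p : C1 F -> C1 G -> relevant n d -> U p ->
  pd d (fun q => F q * G q)%C p = (pd d F p * G p + F p * pd d G p)%C.
Proof.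
  intros [_ HdF] [_ HdG] Hd Hp. destruct (HdF d Hd p Hp), (HdG d Hd p Hp).
  change (pd d (fun q => F q * G q)%C p) with
    (Derive (fun t => Re (F (move d t p)) * Re (G (move d t p))
                      - Im (F (move d t p)) * Im (G (move d t p))) 0,
     Derive (fun t => Re (F (move d t p)) * Im (G (move d t p))
                      + Im (F (move d t p)) * Re (G (move d t p))) 0).
  rewrite Derive_minus, Derive_plus by (apply ex_derive_mult; auto).
  rewrite !Derive_mult by auto. rewrite !move_0.
  unfold pd. apply injective_projections; unfold Re, Im; simpl; ring.
Qed.

Lemma pd_scale_plus F G d p a b : C1 F -> C1 G -> relevant n d -> U p ->
  pd d (fun q => a * F q + b * G q)%C p = (a * pd d F p + b * pd d G p)%C.
Proof.
  intros HF HG Hd Hp.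
  rewrite (pd_plus (fun q => a * F q)%C (fun q => b * G q)%C), !pd_mult, !pd_const; auto using C1_const, C1_mult.
  ring.
Qed.

Inductive poly_of (S : (Pt -> C) -> Prop) : (Pt -> C) -> Prop :=
  | poly_of_base F : S F -> poly_of S F
  | poly_of_const c : poly_of S (fun _ => c)
  | poly_of_plus F G : poly_of S F -> poly_of S G -> poly_of S (fun q => F q + G q)%C
  | poly_of_mult F G : poly_of S F -> poly_of S G -> poly_of S (fun q => F q * G q)%C.

Definition C1_with_poly_pd (S : (Pt -> C) -> Prop) (F : Pt -> C) : Prop :=
  C1 F /\ forall d, relevant n d -> exists G, poly_of S G /\ eq_on (pd d F) G.

Lemma poly_of_C1_with_poly_pd S : (forall F, S F -> C1_with_poly_pd S F) ->
  forall F, poly_of S F -> C1_with_poly_pd S F.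
Proof.
  unfold C1_with_poly_pd. intros HS F HF.
  induction HF as [F HF|c|F G _ [CF DF] _ [CG DG]|F G PF [CF DF] PG [CG DG]].
  - auto.
  - split; [apply C1_const|]. intros d Hd. exists (fun _ => RtoC 0).
    split; [apply poly_of_const | intros p _; apply pd_const].
  - split; [now apply C1_plus|]. intros d Hd.
    destruct (DF d Hd) as [F' [PF' EF']], (DG d Hd) as [G' [PG' EG']].
    exists (fun q => F' q + G' q)%C. split; [now apply poly_of_plus|].
    intros p Hp. rewrite pd_plus, EF', EG'; auto.
  - split; [now apply C1_mult|]. intros d Hd.
    destruct (DF d Hd) as [F' [PF' EF']], (DG d Hd) as [G' [PG' EG']].
    exists (fun q => F' q * G q + F q * G' q)%C.
    split; [apply poly_of_plus; apply poly_of_mult; auto|].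
    intros p Hp. rewrite pd_mult, EF', EG'; auto.
Qed.

Lemma smooth_poly_of S : (forall F, S F -> C1_with_poly_pd S F) ->
  forall F, poly_of S F -> smooth n U F.
Proof.
  intros HS F HF. apply (smooth_coind (fun H => exists F, poly_of S F /\ eq_on F H)); [|eauto using eq_on_refl].
  intros H [F' [PF' EF']]. destruct (poly_of_C1_with_poly_pd S HS F' PF') as [C' D']. split.
  - eapply C1_eq_on; eauto.
  - intros d Hd. destruct (D' d Hd) as [G [PG EG]]. exists G. split; auto.
    eapply eq_on_trans; [apply eq_on_sym, EG|]. now apply pd_eq_on.
Qed.

Lemma smooth_poly_of_smooth F : poly_of (smooth n U) F -> smooth n U F.
Proof.
  apply smooth_poly_of. intros G HG. split; [now apply smooth_C1|].
  intros d Hd. exists (pd d G). split; [apply poly_of_base, smooth_pd | apply eq_on_refl]; auto.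
Qed.

Lemma smooth_const c : smooth n U (fun _ => c).
Proof. apply smooth_poly_of_smooth, poly_of_const. Qed.

Lemma smooth_plus F G : smooth n U F -> smooth n U G -> smooth n U (fun q => F q + G q)%C.
Proof. intros; apply smooth_poly_of_smooth, poly_of_plus; apply poly_of_base; auto. Qed.

Lemma smooth_mult F G : smooth n U F -> smooth n U G -> smooth n U (fun q => F q * G q)%C.
Proof. intros; apply smooth_poly_of_smooth, poly_of_mult; apply poly_of_base; auto. Qed.

Section Schwarz.
Variable pi : C -> R.
Hypothesis pi_pd : forall G d q, pi (pd d G q) = Derive (fun t => pi (G (move d t q))) 0.
Hypothesis pi_ex_derive : forall G d q, C1 G -> relevant n d -> U q ->
  ex_derive (fun t => pi (G (move d t q))) 0.
Hypothesis pi_minus : forall a b, pi (a - b)%C = pi a - pi b.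
Hypothesis pi_le_Cmod : forall a, Rabs (pi a) <= Cmod a.

Lemma Derive_pi_move G d q s :
  Derive (fun t => pi (G (move d t q))) s = pi (pd d G (move d s q)).
Proof. rewrite Derive_shift, pi_pd. apply Derive_ext. intro t. now rewrite move_add. Qed.

Lemma ex_derive_pi_move G d q s : C1 G -> relevant n d -> U (move d s q) ->
  ex_derive (fun t => pi (G (move d t q))) s.
Proof.
  intros HG Hd Hq. apply ex_derive_shift.
  eapply ex_derive_ext; [|apply (pi_ex_derive G d (move d s q)); auto].
  intro t; simpl. now rewrite move_add.
Qed.

Lemma continuity_2d_pi_move G d1 d2 p : C1 G -> relevant n d1 -> relevant n d2 -> U p ->
  continuity_2d_pt (fun u v => pi (G (move d1 u (move d2 v p)))) 0 0.
Proof.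
  intros [Hc _] H1 H2 Hp eps.
  destruct (Hc p Hp eps (cond_pos eps)) as [rc [Hrc Kc]].
  destruct (hU p Hp) as [rU [HrU KU]].
  assert (Hr : 0 < Rmin rU rc / 2) by (apply Rdiv_lt_0_compat; [apply Rmin_pos|]; lra).
  exists (mkposreal _ Hr). intros u v Hu Hv; simpl in Hu, Hv. rewrite Rminus_0_r in Hu, Hv.
  rewrite !move_0, <- pi_minus. eapply Rle_lt_trans; [apply pi_le_Cmod|].
  assert (Hnear : near_pt n (Rmin rU rc) p (move d1 u (move d2 v p)))
    by (apply near_pt_move2; auto; apply Rmin_pos; auto).
  apply Kc; [apply KU|]; eapply near_pt_le; eauto; [apply Rmin_l | apply Rmin_r].
Qed.

Lemma schwarz_pi F d1 d2 p : smooth n U F -> relevant n d1 -> relevant n d2 -> U p ->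
  pi (pd d1 (pd d2 F) p) = pi (pd d2 (pd d1 F) p).
Proof.
  intros HF H1 H2 Hp.
  set (h u v := pi (F (move d1 u (move d2 v p)))).
  assert (Dv : forall u v, Derive (fun t => h u t) v = pi (pd d2 F (move d1 u (move d2 v p)))).
  { intros u v. rewrite move_comm, <- Derive_pi_move. apply Derive_ext. intro t. now rewrite <- move_comm. }
  assert (Du : forall u v, Derive (fun t => h t v) u = pi (pd d1 F (move d1 u (move d2 v p))))
    by (intros u v; apply Derive_pi_move).
  assert (Dvu : forall u v, Derive (fun z => Derive (fun t => h z t) v) u
                            = pi (pd d1 (pd d2 F) (move d1 u (move d2 v p)))).
  { intros u v. rewrite <- Derive_pi_move. apply Derive_ext. intro z. apply Dv. }
  assert (Duv : forall u v, Derive (fun z => Derive (fun t => h t z) u) v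
                            = pi (pd d2 (pd d1 F) (move d1 u (move d2 v p)))).
  { intros u v. rewrite move_comm, <- Derive_pi_move.
    apply Derive_ext. intro z. now rewrite Du, move_comm. }
  pose proof (Dvu 0 0) as E1. pose proof (Duv 0 0) as E2. rewrite !move_0 in E1, E2.
  rewrite <- E1, <- E2. apply Schwarz.
  - destruct (hU p Hp) as [rU [HrU KU]]. assert (HrU2 : 0 < rU / 2) by lra.
    exists (mkposreal _ HrU2). intros u v Hu Hv. simpl in Hu, Hv. rewrite Rminus_0_r in Hu, Hv.
    assert (HUX : U (move d1 u (move d2 v p))) by (apply KU, near_pt_move2; auto).
    assert (HUX' : U (move d2 v (move d1 u p))) by now rewrite <- move_comm.
    repeat split.
    + apply ex_derive_pi_move; auto using smooth_C1.
    + eapply ex_derive_ext; [|apply (ex_derive_pi_move F d2 (move d1 u p) v); auto using smooth_C1].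
      intro t; simpl. unfold h. now rewrite move_comm.
    + eapply ex_derive_ext; [|apply (ex_derive_pi_move (pd d2 F) d1 (move d2 v p) u); auto].
      * intro z; simpl. now rewrite Dv.
      * apply smooth_C1, smooth_pd; auto.
    + eapply ex_derive_ext; [|apply (ex_derive_pi_move (pd d1 F) d2 (move d1 u p) v); auto].
      * intro z; simpl. now rewrite Du, move_comm.
      * apply smooth_C1, smooth_pd; auto.
  - eapply continuity_2d_pt_ext; [intros u v; symmetry; apply Dvu|].
    apply continuity_2d_pi_move; auto. apply smooth_C1, smooth_pd, smooth_pd; auto.
  - eapply continuity_2d_pt_ext; [intros u v; symmetry; apply Duv|].
    apply continuity_2d_pi_move; auto. apply smooth_C1, smooth_pd, smooth_pd; auto.
Qed.
End Schwarz.

Lemma pd_comm F d1 d2 p : smooth n U F -> relevant n d1 -> relevant n d2 -> U p ->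
  pd d1 (pd d2 F) p = pd d2 (pd d1 F) p.
Proof.
  intros HF H1 H2 Hp. apply injective_projections.
  - apply (schwarz_pi Re); auto.
    + intros G d q HG Hd Hq. apply (proj2 HG d Hd q Hq).
    + apply re_le_Cmod.
  - apply (schwarz_pi Im); auto.
    + intros G d q HG Hd Hq. apply (proj2 HG d Hd q Hq).
    + intros a. eapply Rle_trans; [apply Rmax_r|apply Rmax_Cmod].
Qed.

Section Wirtinger.
Variables k l : nat.
Hypothesis hk : (k < n)%nat.
Hypothesis hl : (l < n)%nat.

Inductive wdir := Ws | Wsb | Wz | Wzb.

Definition wop (o : wdir) : (Pt -> C) -> Pt -> C :=
  match o with Ws => ds k | Wsb => dsb l | Wz => dz | Wzb => dzb end.

Definition re_dir (o : wdir) : dir :=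
  match o with Ws => DReS k | Wsb => DReS l | Wz | Wzb => DReZ end.
Definition im_dir (o : wdir) : dir :=
  match o with Ws => DImS k | Wsb => DImS l | Wz | Wzb => DImZ end.
Definition im_coef (o : wdir) : C :=
  match o with Ws | Wz => (- (/ 2 * Ci))%C | Wsb | Wzb => (/ 2 * Ci)%C end.

Lemma relevant_re_dir o : relevant n (re_dir o).
Proof. destruct o; simpl; auto. Qed.

Lemma relevant_im_dir o : relevant n (im_dir o).
Proof. destruct o; simpl; auto. Qed.

Local Hint Resolve relevant_re_dir relevant_im_dir : core.

Lemma wop_pd o F p : wop o F p = (/ 2 * pd (re_dir o) F p + im_coef o * pd (im_dir o) F p)%C.
Proof. destruct o; simpl; unfold ds, dsb, dz, dzb; ring. Qed.

Lemma smooth_wop o F : smooth n U F -> smooth n U (wop o F).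
Proof.
  intro HF. apply (smooth_eq_on (fun q => / 2 * pd (re_dir o) F q + im_coef o * pd (im_dir o) F q)%C).
  - intros p _. symmetry. apply wop_pd.
  - apply smooth_plus; apply smooth_mult; auto using smooth_const, smooth_pd.
Qed.

Lemma wop_eq_on o F G : eq_on F G -> eq_on (wop o F) (wop o G).
Proof. intros HFG p Hp. rewrite !wop_pd, (pd_eq_on F G), (pd_eq_on F G (im_dir o)); auto. Qed.

Lemma wop_const o c p : wop o (fun _ => c) p = RtoC 0.
Proof. rewrite wop_pd, !pd_const. ring. Qed.

Lemma wop_plus o F G p : C1 F -> C1 G -> U p ->
  wop o (fun q => F q + G q)%C p = (wop o F p + wop o G p)%C.
Proof. intros HF HG Hp. rewrite !wop_pd, !pd_plus; auto. ring. Qed.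

Lemma wop_mult o F G p : C1 F -> C1 G -> U p ->
  wop o (fun q => F q * G q)%C p = (wop o F p * G p + F p * wop o G p)%C.
Proof. intros HF HG Hp. rewrite !wop_pd, !pd_mult; auto. ring. Qed.

Lemma wop_comm o1 o2 F p : smooth n U F -> U p -> wop o1 (wop o2 F) p = wop o2 (wop o1 F) p.
Proof.
  intros HF Hp.
  assert (HC : forall d, relevant n d -> C1 (pd d F)) by (intros; apply smooth_C1, smooth_pd; auto).
  assert (E : forall o, wop o F = fun q => (/ 2 * pd (re_dir o) F q + im_coef o * pd (im_dir o) F q)%C)
    by (intros o; apply functional_extensionality; intro; apply wop_pd).
  rewrite (E o1), (E o2), !wop_pd, !pd_scale_plus; auto.
  rewrite (pd_comm F (re_dir o1) (re_dir o2)), (pd_comm F (re_dir o1) (im_dir o2)),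
          (pd_comm F (im_dir o1) (re_dir o2)), (pd_comm F (im_dir o1) (im_dir o2)); auto.
  ring.
Qed.

Lemma smooth_iter o j F : smooth n U F -> smooth n U (Nat.iter j (wop o) F).
Proof. intro HF. induction j; simpl; auto using smooth_wop. Qed.

Lemma iter_eq_on o j F G : eq_on F G -> eq_on (Nat.iter j (wop o) F) (Nat.iter j (wop o) G).
Proof. intro HFG. induction j; simpl; auto using wop_eq_on. Qed.

Lemma wop_iter_comm o o' j F : smooth n U F ->
  eq_on (wop o (Nat.iter j (wop o') F)) (Nat.iter j (wop o') (wop o F)).
Proof.
  intro HF. induction j as [|j IH]; simpl; [apply eq_on_refl|].
  intros p Hp. rewrite wop_comm by auto using smooth_iter. now apply wop_eq_on.
Qed.

Record mindex := MI { m_s : nat; m_sb : nat; m_z : nat; m_zb : nat }.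

Definition deriv (m : mindex) (F : Pt -> C) : Pt -> C :=
  Nat.iter (m_s m) (wop Ws) (Nat.iter (m_sb m) (wop Wsb)
    (Nat.iter (m_z m) (wop Wz) (Nat.iter (m_zb m) (wop Wzb) F))).

Definition bump (o : wdir) (m : mindex) : mindex :=
  let 'MI i j a c := m in
  match o with
  | Ws => MI (S i) j a c | Wsb => MI i (S j) a c | Wz => MI i j (S a) c | Wzb => MI i j a (S c)
  end.

Lemma smooth_deriv m F : smooth n U F -> smooth n U (deriv m F).
Proof. intro HF. unfold deriv. repeat apply smooth_iter. exact HF. Qed.

Lemma wop_deriv o m F : smooth n U F -> eq_on (wop o (deriv m F)) (deriv (bump o m) F).
Proof.
  intro HF. destruct m as [i j a c]; unfold deriv; destruct o; cbn [bump m_s m_sb m_z m_zb].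
  - apply eq_on_refl.
  - apply wop_iter_comm. repeat apply smooth_iter. exact HF.
  - eapply eq_on_trans; [apply wop_iter_comm; repeat apply smooth_iter; exact HF|].
    apply iter_eq_on, wop_iter_comm. repeat apply smooth_iter. exact HF.
  - eapply eq_on_trans; [apply wop_iter_comm; repeat apply smooth_iter; exact HF|].
    apply iter_eq_on. eapply eq_on_trans; [apply wop_iter_comm; repeat apply smooth_iter; exact HF|].
    apply iter_eq_on, wop_iter_comm. apply smooth_iter, HF.
Qed.

Lemma deriv_eq_on m F G : eq_on F G -> eq_on (deriv m F) (deriv m G).
Proof. intro HFG. unfold deriv. repeat apply iter_eq_on. exact HFG. Qed.

Section Metric.
Variable lam : Pt -> R.
Hypothesis lam_pos : forall p, U p -> 0 < lam p.
Hypothesis lam_smooth : smooth n U (lamC lam).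

Lemma C1_comp_lam (h h' : R -> R) : (forall x, 0 < x -> is_derive h x (h' x)) ->
  C1 (fun q => RtoC (h (lam q))).
Proof.
  intros Hh. destruct (smooth_C1 _ lam_smooth) as [Hc Hd]. split.
  - intros p Hp eps He.
    pose proof (ex_derive_continuous h _ (ex_intro _ _ (Hh _ (lam_pos p Hp)))) as Hcont.
    destruct (proj1 (filterlim_locally _ _) Hcont (mkposreal eps He)) as [r1 Hr1].
    destruct (Hc p Hp r1 (cond_pos r1)) as [r [Hr K]]. exists r; split; auto.
    intros q Hq Hn. specialize (K q Hq Hn). unfold lamC in K.
    rewrite <- RtoC_minus in K |- *. rewrite Cmod_R in K |- *. apply (Hr1 (lam q)), K.
  - intros d Hrel p Hp. destruct (Hd d Hrel p Hp) as [Hre _]. split.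
    + apply (ex_derive_comp h (fun t => lam (move d t p))); auto.
      rewrite move_0. eexists. apply Hh; auto.
    + apply (ex_derive_ext (fun _ => 0)); [reflexivity | apply ex_derive_const].
Qed.

Lemma pd_comp_lam (h h' : R -> R) d p : (forall x, 0 < x -> is_derive h x (h' x)) ->
  relevant n d -> U p ->
  pd d (fun q => RtoC (h (lam q))) p = (RtoC (h' (lam p)) * pd d (lamC lam) p)%C.
Proof.
  intros Hh Hrel Hp. destruct (smooth_C1 _ lam_smooth) as [_ Hd]. destruct (Hd d Hrel p Hp) as [Hre _].
  change (pd d (fun q => RtoC (h (lam q))) p) with
    (Derive (fun t => h (lam (move d t p))) 0, Derive (fun _ : R => 0) 0).
  change (pd d (lamC lam) p) with
    (Derive (fun t => lam (move d t p)) 0, Derive (fun _ : R => 0) 0).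
  rewrite Derive_comp, move_0, Derive_const; auto.
  - rewrite (is_derive_unique _ _ _ (Hh _ (lam_pos p Hp))).
    apply injective_projections; simpl; ring.
  - rewrite move_0. eexists. apply Hh; auto.
Qed.

Definition lam_zpow (z : Z) (q : Pt) : C := RtoC (exp (IZR z * ln (lam q))).

Lemma is_derive_zpow (z : Z) x :
  0 < x -> is_derive (fun y => exp (IZR z * ln y)) x (IZR z * exp (IZR z * ln x) / x).
Proof. intro Hx. auto_derive; [lra|]. field. lra. Qed.

Lemma C1_loglam : C1 (loglam lam).
Proof. apply (C1_comp_lam ln Rinv), is_derive_ln. Qed.

Lemma C1_lam_zpow z : C1 (lam_zpow z).
Proof. apply (C1_comp_lam _ _ (is_derive_zpow z)). Qed.

Lemma lam_zpow_1 : eq_on (lam_zpow 1) (lamC lam).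
Proof. intros p Hp. unfold lam_zpow, lamC. rewrite Rmult_1_l, exp_ln; auto. Qed.

Lemma lam_zpow_m1 p : U p -> lam_zpow (-1) p = RtoC (/ lam p).
Proof.
  intros Hp. unfold lam_zpow. f_equal.
  replace (IZR (-1) * ln (lam p)) with (- ln (lam p)) by (simpl; ring).
  rewrite exp_Ropp, exp_ln; auto.
Qed.

Lemma inv_lamC p : U p -> (/ lamC lam p)%C = lam_zpow (-1) p.
Proof.
  intros Hp. rewrite lam_zpow_m1 by auto. unfold lamC.
  rewrite RtoC_inv; auto. apply Rgt_not_eq, lam_pos, Hp.
Qed.

Lemma pd_loglam d p : relevant n d -> U p ->
  pd d (loglam lam) p = (lam_zpow (-1) p * pd d (lamC lam) p)%C.
Proof.
  intros Hrel Hp. unfold loglam. rewrite (pd_comp_lam ln Rinv d p is_derive_ln Hrel Hp).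
  now rewrite lam_zpow_m1.
Qed.

Lemma pd_lam_zpow z d p : relevant n d -> U p ->
  pd d (lam_zpow z) p = (RtoC (IZR z) * lam_zpow z p * pd d (loglam lam) p)%C.
Proof.
  intros Hrel Hp. rewrite pd_loglam, lam_zpow_m1 by auto. unfold lam_zpow.
  rewrite (pd_comp_lam _ _ d p (is_derive_zpow z) Hrel Hp).
  unfold Rdiv. rewrite !RtoC_mult. apply injective_projections; simpl; ring.
Qed.

Definition metric_atom (F : Pt -> C) : Prop :=
  smooth n U F \/ F = loglam lam \/ exists z, F = lam_zpow z.

Lemma metric_atom_C1_with_poly_pd F : metric_atom F -> C1_with_poly_pd metric_atom F.
Proof.
  assert (Hdlam : forall d, relevant n d -> poly_of metric_atom (pd d (lamC lam)))
    by (intros d Hd; apply poly_of_base; left; apply smooth_pd; auto).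
  assert (Hinv : poly_of metric_atom (lam_zpow (-1)))
    by (apply poly_of_base; right; right; eauto).
  intros [HF|[->|[z ->]]]; split.
  - now apply smooth_C1.
  - intros d Hd. exists (pd d F). split; [apply poly_of_base; left; now apply smooth_pd | apply eq_on_refl].
  - apply C1_loglam.
  - intros d Hd. exists (fun q => lam_zpow (-1) q * pd d (lamC lam) q)%C.
    split; [apply poly_of_mult; auto|]. intros p Hp. now apply pd_loglam.
  - apply C1_lam_zpow.
  - intros d Hd.
    exists (fun q => RtoC (IZR z) * lam_zpow z q * (lam_zpow (-1) q * pd d (lamC lam) q))%C. split.
    + repeat apply poly_of_mult; auto using poly_of_const.
      apply poly_of_base; right; right; eauto.
    + intros p Hp. rewrite pd_lam_zpow, pd_loglam; auto.
Qed.

Lemma smooth_loglam : smooth n U (loglam lam).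
Proof.
  apply (smooth_poly_of metric_atom metric_atom_C1_with_poly_pd), poly_of_base. now right; left.
Qed.

Lemma smooth_lam_zpow z : smooth n U (lam_zpow z).
Proof.
  apply (smooth_poly_of metric_atom metric_atom_C1_with_poly_pd), poly_of_base. right; right; eauto.
Qed.

Lemma wop_lam_zpow o z p : U p ->
  wop o (lam_zpow z) p = (RtoC (IZR z) * lam_zpow z p * wop o (loglam lam) p)%C.
Proof. intros Hp. rewrite !wop_pd, !pd_lam_zpow; auto. ring. Qed.

Lemma conj_lam_zpow z p : Cconj (lam_zpow z p) = lam_zpow z p.
Proof. apply conj_RtoC. Qed.

Lemma conj_loglam : (fun q => Cconj (loglam lam q)) = loglam lam.
Proof. apply functional_extensionality; intro q. apply conj_RtoC. Qed.

Section Commutator.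
Variable f : Pt -> C.
Hypothesis f_smooth : smooth n U f.
Hypothesis curvature : forall p, U p -> dz (dzb (loglam lam)) p = lamC lam p.

(* Leaves are tagged by a boolean rather than carrying a function, so that expressions are
   closed terms that [vm_compute] can normalize. *)
Inductive expr :=
  | Atom (m : mindex) (of_f : bool)
  | Zpow (z : Z)
  | Cst (c : Z)
  | Add (a b : expr)
  | Mul (a b : expr).

Fixpoint eval (e : expr) : Pt -> C :=
  match e with
  | Atom m b => deriv m (if b then f else loglam lam)
  | Zpow z => lam_zpow z
  | Cst c => fun _ => RtoC (IZR c)
  | Add a b => fun q => (eval a q + eval b q)%C
  | Mul a b => fun q => (eval a q * eval b q)%C
  end.

Fixpoint D (o : wdir) (e : expr) : expr :=
  match e with
  | Atom m b => Atom (bump o m) b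
  | Zpow z => Mul (Mul (Cst z) (Zpow z)) (Atom (bump o (MI 0 0 0 0)) false)
  | Cst _ => Cst 0
  | Add a b => Add (D o a) (D o b)
  | Mul a b => Add (Mul (D o a) b) (Mul a (D o b))
  end.

Definition D_mindex (m : mindex) (e : expr) : expr :=
  Nat.iter (m_s m) (D Ws) (Nat.iter (m_sb m) (D Wsb)
    (Nat.iter (m_z m) (D Wz) (Nat.iter (m_zb m) (D Wzb) e))).

Lemma smooth_eval e : smooth n U (eval e).
Proof.
  induction e as [m []| | | |]; simpl.
  - now apply smooth_deriv.
  - apply smooth_deriv, smooth_loglam.
  - apply smooth_lam_zpow.
  - apply smooth_const.
  - now apply smooth_plus.
  - now apply smooth_mult.
Qed.

Lemma D_correct o e : eq_on (wop o (eval e)) (eval (D o e)).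
Proof.
  induction e as [m b| | |a IHa b IHb|a IHa b IHb]; intros p Hp; simpl.
  - apply wop_deriv; auto. destruct b; auto using smooth_loglam.
  - rewrite wop_lam_zpow by auto. now destruct o.
  - apply wop_const.
  - rewrite wop_plus, IHa, IHb; auto using smooth_C1, smooth_eval.
  - rewrite wop_mult, IHa, IHb; auto using smooth_C1, smooth_eval.
Qed.

Lemma D_iter_correct o j e : eq_on (Nat.iter j (wop o) (eval e)) (eval (Nat.iter j (D o) e)).
Proof.
  induction j as [|j IH]; simpl; [apply eq_on_refl|].
  eapply eq_on_trans; [apply wop_eq_on, IH | apply D_correct].
Qed.

Lemma D_mindex_correct m e : eq_on (deriv m (eval e)) (eval (D_mindex m e)).
Proof.
  unfold deriv, D_mindex.
  eapply eq_on_trans; [apply iter_eq_on, iter_eq_on, iter_eq_on, D_iter_correct|].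
  eapply eq_on_trans; [apply iter_eq_on, iter_eq_on, D_iter_correct|].
  eapply eq_on_trans; [apply iter_eq_on, D_iter_correct|].
  apply D_iter_correct.
Qed.

Lemma deriv_curvature i j a c :
  eq_on (deriv (MI i j (S a) (S c)) (loglam lam)) (deriv (MI i j a c) (lamC lam)).
Proof.
  unfold deriv; cbn [m_s m_sb m_z m_zb]. apply iter_eq_on, iter_eq_on. rewrite !Nat.iter_succ_r.
  apply iter_eq_on. eapply eq_on_trans; [apply wop_iter_comm, smooth_wop, smooth_loglam|].
  apply iter_eq_on. exact curvature.
Qed.

Fixpoint reduce_curvature (e : expr) : expr :=
  match e with
  | Atom (MI i j (S a) (S c)) false => D_mindex (MI i j a c) (Zpow 1)
  | Add a b => Add (reduce_curvature a) (reduce_curvature b)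
  | Mul a b => Mul (reduce_curvature a) (reduce_curvature b)
  | _ => e
  end.

Lemma reduce_curvature_correct e : eq_on (eval e) (eval (reduce_curvature e)).
Proof.
  induction e as [[i j [|a] [|c]] []| | |a IHa b IHb|a IHa b IHb]; try apply eq_on_refl.
  - eapply eq_on_trans; [apply deriv_curvature|].
    eapply eq_on_trans; [apply deriv_eq_on, eq_on_sym, lam_zpow_1|].
    apply (D_mindex_correct _ (Zpow 1)).
  - intros p Hp; simpl. rewrite IHa, IHb; auto.
  - intros p Hp; simpl. rewrite IHa, IHb; auto.
Qed.

Lemma wop_reify o F e : eq_on F (eval e) -> eq_on (wop o F) (eval (D o e)).
Proof. intro HF. eapply eq_on_trans; [apply wop_eq_on, HF | apply D_correct]. Qed.

Definition f_expr : expr := Atom (MI 0 0 0 0) true.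
Definition a_expr : expr := Mul (Cst (-1)) (Mul (Zpow (-1)) (Atom (MI 1 0 0 1) false)).
Definition abar_expr : expr := Mul (Cst (-1)) (Mul (Zpow (-1)) (Atom (MI 0 1 1 0) false)).
Definition A_expr : expr := D Wzb a_expr.
Definition Abar_expr : expr := D Wz abar_expr.
Definition xi_expr (e : expr) : expr :=
  Mul (Cst (-1)) (Mul (Zpow (-1)) (D Wz (Mul A_expr (D Wz e)))).
Definition vbar_expr (e : expr) : expr := Add (D Wsb e) (Mul abar_expr (D Wzb e)).
Definition e_expr : expr :=
  Add (Atom (MI 1 1 0 0) false) (Mul (Cst (-1)) (Mul (Zpow 1) (Mul a_expr abar_expr))).
Definition f_kl_expr : expr := Mul A_expr Abar_expr.
Definition P_expr (e : expr) : expr := D Wz (Mul (Zpow (-1)) (D Wz e)).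
Definition Pb_expr (e : expr) : expr := D Wzb (Mul (Zpow (-1)) (D Wzb e)).
Definition Box_expr (e : expr) : expr := Mul (Cst (-1)) (Mul (Zpow (-1)) (D Wz (D Wzb e))).

Lemma a_reify : eq_on (a_ lam k) (eval a_expr).
Proof. intros p Hp. unfold a_. cbn [eval a_expr]. rewrite <- inv_lamC by auto. unfold deriv; simpl. ring. Qed.

Lemma abar_reify : eq_on (fun q => Cconj (a_ lam l q)) (eval abar_expr).
Proof.
  intros p Hp. unfold a_; cbv beta.
  rewrite inv_lamC, Copp_conj, Cmult_conj, ds_conj, conj_lam_zpow by auto.
  assert (E : (fun q => Cconj (dzb (loglam lam) q)) = dz (loglam lam)).
  { apply functional_extensionality; intro q. now rewrite dzb_conj, conj_loglam. }
  rewrite E. cbn [eval abar_expr]. unfold deriv; simpl. ring.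
Qed.

Lemma A_reify : eq_on (A_ lam k) (eval A_expr).
Proof. apply (wop_reify Wzb), a_reify. Qed.

Lemma Abar_reify : eq_on (fun q => Cconj (A_ lam l q)) (eval Abar_expr).
Proof.
  eapply eq_on_trans; [|apply (wop_reify Wz _ _ abar_reify)].
  intros p _. apply dzb_conj.
Qed.

Lemma xi_reify F e : eq_on F (eval e) -> eq_on (xi_ lam k F) (eval (xi_expr e)).
Proof.
  intros HF p Hp.
  assert (HAF : eq_on (fun q => A_ lam k q * dz F q)%C (eval (Mul A_expr (D Wz e)))).
  { intros q Hq. cbn [eval]. rewrite (A_reify q Hq), <- (wop_reify Wz F e HF q Hq). reflexivity. }
  unfold xi_, xi_expr. cbn [eval]. rewrite <- (wop_reify Wz _ _ HAF p Hp), <- inv_lamC by auto.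
  simpl. ring.
Qed.

Lemma vbar_reify F e : eq_on F (eval e) -> eq_on (vbar_ lam l F) (eval (vbar_expr e)).
Proof.
  intros HF p Hp. unfold vbar_, vbar_expr. cbn [eval].
  rewrite <- (wop_reify Wsb F e HF p Hp), <- (wop_reify Wzb F e HF p Hp), <- (abar_reify p Hp).
  reflexivity.
Qed.

Lemma e_reify : eq_on (e_ lam k l) (eval e_expr).
Proof.
  intros p Hp. unfold e_, e_expr. cbn [eval].
  rewrite <- (a_reify p Hp), <- (abar_reify p Hp), (lam_zpow_1 p Hp). unfold deriv; simpl. ring.
Qed.

Lemma f_kl_reify : eq_on (f_ lam k l) (eval f_kl_expr).
Proof.
  intros p Hp. unfold f_, f_kl_expr. cbn [eval]. now rewrite <- (A_reify p Hp), <- (Abar_reify p Hp).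
Qed.

Lemma P_reify F e : eq_on F (eval e) -> eq_on (P_ lam F) (eval (P_expr e)).
Proof.
  intro HF. apply (wop_reify Wz). intros p Hp. cbn [eval].
  now rewrite <- (wop_reify Wz F e HF p Hp), inv_lamC.
Qed.

Lemma Pb_reify F e : eq_on F (eval e) -> eq_on (Pb_ lam F) (eval (Pb_expr e)).
Proof.
  intro HF. apply (wop_reify Wzb). intros p Hp. cbn [eval].
  now rewrite <- (wop_reify Wzb F e HF p Hp), inv_lamC.
Qed.

Lemma Box_reify F e : eq_on F (eval e) -> eq_on (Box lam F) (eval (Box_expr e)).
Proof.
  intros HF p Hp. unfold Box, Box_expr. cbn [eval].
  rewrite <- (wop_reify Wz _ _ (wop_reify Wzb F e HF) p Hp), <- inv_lamC by auto. simpl. ring.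
Qed.

Definition commutator_expr : expr :=
  Add (vbar_expr (xi_expr f_expr)) (Mul (Cst (-1)) (xi_expr (vbar_expr f_expr))).

Definition curvature_terms_expr : expr :=
  Add (Add (Mul (Pb_expr e_expr) (P_expr f_expr)) (Mul (Cst (-2)) (Mul f_kl_expr (Box_expr f_expr))))
      (Mul (Mul (Zpow (-1)) (D Wz f_kl_expr)) (D Wzb f_expr)).

Lemma commutator_reify p : U p ->
  (vbar_ lam l (xi_ lam k f) p - xi_ lam k (vbar_ lam l f) p)%C = eval commutator_expr p.
Proof.
  intros Hp. assert (Hf : eq_on f (eval f_expr)) by apply eq_on_refl.
  unfold commutator_expr. cbn [eval].
  rewrite <- (vbar_reify _ _ (xi_reify _ _ Hf) p Hp), <- (xi_reify _ _ (vbar_reify _ _ Hf) p Hp).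
  simpl. ring.
Qed.

Lemma curvature_terms_reify p : U p ->
  (Pb_ lam (e_ lam k l) p * P_ lam f p - 2 * f_ lam k l p * Box lam f p
   + / lamC lam p * dz (f_ lam k l) p * dzb f p)%C = eval curvature_terms_expr p.
Proof.
  intros Hp. assert (Hf : eq_on f (eval f_expr)) by apply eq_on_refl.
  unfold curvature_terms_expr. cbn [eval].
  rewrite <- (Pb_reify _ _ e_reify p Hp), <- (P_reify _ _ Hf p Hp), <- (f_kl_reify p Hp),
    <- (Box_reify _ _ Hf p Hp), <- (wop_reify Wz _ _ f_kl_reify p Hp),
    <- (wop_reify Wzb _ _ Hf p Hp), inv_lamC by auto.
  simpl. ring.
Qed.

Theorem vbar_xi_commutator p : U p ->
  (vbar_ lam l (xi_ lam k f) p - xi_ lam k (vbar_ lam l f) p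
   = Pb_ lam (e_ lam k l) p * P_ lam f p - 2 * f_ lam k l p * Box lam f p
     + / lamC lam p * dz (f_ lam k l) p * dzb f p)%C.
Proof.
  intros Hp. rewrite commutator_reify, curvature_terms_reify by auto.
  rewrite (reduce_curvature_correct commutator_expr p Hp), (reduce_curvature_correct curvature_terms_expr p Hp).
  remember (reduce_curvature commutator_expr) as lhs eqn:Hlhs. vm_compute in Hlhs. subst lhs.
  remember (reduce_curvature curvature_terms_expr) as rhs eqn:Hrhs. vm_compute in Hrhs. subst rhs.
  cbn [eval]. rewrite (lam_zpow_1 p Hp), <- (inv_lamC p Hp).
  field. unfold lamC. intro E. apply (f_equal fst) in E. simpl in E. pose proof (lam_pos p Hp). lra.
Qed.
End Commutator.
End Metric.
End Wirtinger.
End Chart.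

Theorem lemma3p7 (g : nat) (hg : (2 <= g)%nat)
  (U : Pt -> Prop) (lam : Pt -> R)
  (hU : open_chart (3 * g - 3) U)
  (hpos : forall p, U p -> (0 < lam p)%R)
  (hsm : smooth (3 * g - 3) U (lamC lam))
  (hcurv : forall p, U p -> dz (dzb (loglam lam)) p = lamC lam p)
  (f : Pt -> C) (hf : smooth (3 * g - 3) U f)
  (k l : nat) (hk : (k < 3 * g - 3)%nat) (hl : (l < 3 * g - 3)%nat)
  (p : Pt) (hp : U p) :
  (vbar_ lam l (xi_ lam k f) p - xi_ lam k (vbar_ lam l f) p
   = Pb_ lam (e_ lam k l) p * P_ lam f p
     - 2 * f_ lam k l p * Box lam f p
     + / lamC lam p * dz (f_ lam k l) p * dzb f p)%C.
Proof.
  exact (vbar_xi_commutator _ U hU k l hk hl lam hpos hsm f hf hcurv p hp).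
Qed.
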